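(* Let $r\ge1$ and $f,g\in \mathrm{M}_r(\mathbb{C})[Z]$. Define $P_f(x,y_1)=\det(y_1I-f(xI))\in\mathbb{C}[x,y_1]$, $P_g(x,y_2)=\det(y_2I-g(xI))\in\mathbb{C}[x,y_2]$, and $$R_{f,g}(y_1,y_2)=\mathrm{Res}_x\left(P_f(x,y_1),P_g(x,y_2)\right),\qquad T_{f,g}(y_1,y_2)=\mathrm{Res}_x\left(P_f(x,y_1),\,y_2-\det(g(xI))\right),$$ both in $\mathbb{C}[y_1,y_2]$, where $\mathrm{Res}_x$ is the resultant with respect to $x$. (i) If every eigenvalue of $f(xI)$ and every eigenvalue of $g(xI)$ are multiplicatively independent functions in $\overline{\mathbb{C}(x)}$, then $R_{f,g}(y_1,y_2)$ has no factor of the form $y_1^iy_2^j-\rho$ or $y_1^i-\rho y_2^j$ with $i,j$ nonnegative integers not both zero and $\rho$ a root of unity. (ii) If every eigenvalue of $f(xI)$ and $\det(g(xI))$ are multiplicatively independent functions in $\overline{\mathbb{C}(x)}$, then $T_{f,g}(y_1,y_2)$ has no factor of the form $y_1^iy_2^j-\rho$ or $y_1^i-\rho y_2^j$ with $i,j$ nonnegative integers not both zero and $\rho$ a root of unity.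
   Context: A matrix polynomial $f\in\mathrm{M}_r(\mathbb{C})[Z]$ is $f(Z)=C_dZ^d+\cdots+C_0$ with $C_i\in\mathrm{M}_r(\mathbb{C})$, $C_d\ne0$, $d\ge1$; $f(xI)=\sum_iC_ix^i$ for a scalar variable $x$, $I$ the identity matrix. Eigenvalues of $f(xI)$ are taken in an algebraic closure $\overline{\mathbb{C}(x)}$ of $\mathbb{C}(x)$. Two functions $h_1,h_2\in\overline{\mathbb{C}(x)}$ are multiplicatively independent if there is no $(k_1,k_2)\in\mathbb{Z}^2\setminus\{(0,0)\}$ with $h_1^{k_1}h_2^{k_2}=1$. *)

(* C = R[i] (complex numbers over an arbitrary realType R,
   i.e. a copy of the complex field). *)
From HB Require Import structures.
From mathcomp Require Import all_boot all_algebra.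
From mathcomp Require Import fraction complex reals.
Set Implicit Arguments. Unset Strict Implicit. Unset Printing Implicit Defensive.
Import GRing.Theory.
Local Open Scope ring_scope.

(* f(xI) = sum_k C_k x^k, for f = sum_k C_k Z^k in M_r(C)[Z], as an
   r x r matrix with entries in C[x]. *)
Definition evalXI (R : realType) (n : nat) (f : {poly 'M[R[i]]_n.+1})
  : 'M[{poly R[i]}]_n.+1 :=
  \matrix_(i, j) \poly_(k < size f) ((f`_k) i j).

(* C[y1,y2] is represented as {poly {poly C}}: inner variable y1, outer y2.
   Polynomials in x with coefficients in C[y1,y2] are {poly {poly {poly C}}}. *)
Definition y1 (R : realType) : {poly {poly R[i]}} := ('X)%:P.
Definition y2 (R : realType) : {poly {poly R[i]}} := 'X.

Definition liftX (R : realType) (p : {poly R[i]}) : {poly {poly {poly R[i]}}} :=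
  map_poly (fun c : R[i] => c%:P%:P) p.

Definition Pf (R : realType) (n : nat) (f : {poly 'M[R[i]]_n.+1})
  : {poly {poly {poly R[i]}}} :=
  \det ((y1 R)%:P%:M - map_mx (@liftX R) (evalXI f)).

Definition Pg (R : realType) (n : nat) (g : {poly 'M[R[i]]_n.+1})
  : {poly {poly {poly R[i]}}} :=
  \det ((y2 R)%:P%:M - map_mx (@liftX R) (evalXI g)).

Definition Rfg (R : realType) (n : nat) (f g : {poly 'M[R[i]]_n.+1})
  : {poly {poly R[i]}} := resultant (Pf f) (Pg g).

Definition Tfg (R : realType) (n : nat) (f g : {poly 'M[R[i]]_n.+1})
  : {poly {poly R[i]}} :=
  resultant (Pf f) ((y2 R)%:P - liftX (\det (evalXI g))).

Definition root_of_unity (F : pzRingType) (z : F) : Prop :=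
  exists2 k : nat, (0 < k)%N & z ^+ k = 1.

Definition mult_indep (L : unitRingType) (h1 h2 : L) : Prop :=
  forall k1 k2 : int, h1 ^ k1 * h2 ^ k2 = 1 -> k1 = 0 /\ k2 = 0.

Definition has_special_factor (R : realType) (P : {poly {poly R[i]}}) : Prop :=
  exists (i j : nat) (rho : R[i]),
    [/\ (0 < i + j)%N, root_of_unity rho &
      (exists q, P = q * ((y1 R) ^+ i * (y2 R) ^+ j - rho%:P%:P)) \/
      (exists q, P = q * ((y1 R) ^+ i - rho%:P%:P * (y2 R) ^+ j))].

(* L (with the embedding iota) is algebraic over the field K. Together with
   L being algebraically closed, this makes L an algebraic closure of K. *)
Definition algebraic_ext (K L : fieldType) (iota : {rmorphism K -> L}) : Prop :=
  forall z : L, exists2 p : {poly K}, p != 0 & root (map_poly iota p) z.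

Definition embXI (R : realType) (n : nat) (L : fieldType)
  (iota : {rmorphism {fraction {poly R[i]}} -> L}) (f : {poly 'M[R[i]]_n.+1})
  : 'M[L]_n.+1 :=
  map_mx (fun p => iota (tofrac p)) (evalXI f).

From Pilot Require Import Defs.
From HB Require Import structures.
From mathcomp Require Import all_boot all_algebra.
From mathcomp Require Import fraction complex reals.
From mathcomp Require Import zify.
Set Implicit Arguments. Unset Strict Implicit. Unset Printing Implicit Defensive.
Import GRing.Theory.
Local Open Scope ring_scope.

(* Let ca, cb in C[x][y] be the characteristic polynomials of f(xI) and g(xI),
   and xi the image of x in L. If S = y1^i y2^j - rho (or y1^i - rho y2^j)
   divides Res_x(ca(x, y1), cb(x, y2)), choose a zero (a, b) of S, b != 0, one
   of whose coordinates is xi or 1/xi, hence transcendental over C. The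
   resultant vanishes at (a, b), so ca(x0, a) = cb(x0, b) = 0 for some x0,
   which is transcendental as well. Then Res_y1(ca, Res_y2(cb, S)) in C[x]
   vanishes at x0, hence identically; specialising it at x = xi produces
   eigenvalues h1 of f(xI) and h2 of g(xI) with S(h1, h2) = 0, so that
   h1^(ik) h2^(+-jk) = 1 where rho^k = 1. *)

Lemma resultant_polyC (R : comNzRingType) (p : {poly R}) c :
  resultant p c%:P = c ^+ (size p).-1.
Proof.
have dq0 : (size c%:P).-1 = 0%N by rewrite size_polyC; case: (c != 0).
have SylvE i j : Sylvester_mx p c%:P i j = c *+ (i == j :> nat).
  rewrite Sylvester_mxE; case: splitP => -[k /= lt_k] eq_ik.
    by have := leq_trans lt_k (eq_leq dq0).
  have {}eq_ik : i = k :> nat by rewrite eq_ik dq0.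
  rewrite coefC eq_ik subn_eq0 eqn_leq andbC.
  by case: (j <= k)%N; case: (k <= j)%N; rewrite ?mul0rn.
rewrite /resultant (det_trig (A := Sylvester_mx p c%:P)); last first.
  by apply/is_trig_mxP => i j lt_ij; rewrite SylvE ltn_eqF.
rewrite (eq_bigr (fun=> c)) => [|i _]; last by rewrite SylvE eqxx.
by rewrite prodr_const card_ord dq0.
Qed.

Section MapResultant.

Variables (A : comNzRingType) (K : fieldType) (th : {rmorphism A -> K}).
Implicit Types p q : {poly A}.

Lemma map_resultant_eq0 p q z :
    p \is monic -> root (map_poly th p) z -> root (map_poly th q) z ->
  th (resultant p q) = 0.
Proof.
move=> mon_p pz qz.
have p_gt1 : (1 < size p)%N.
  rewrite -(size_map_poly_id0 (f := th)) ?(monicP mon_p) ?rmorph1 ?oner_neq0 //.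
  by apply: root_size_gt1 pz; rewrite monic_neq0 ?monic_map.
have [/size1_polyC Dq | q_gt1] := leqP (size q) 1.
  move: qz; rewrite Dq resultant_polyC map_polyC rootC rmorphXn => /eqP ->.
  by rewrite expr0n -subn1 subn_eq0 leqNgt p_gt1.
have [uv _ /(congr1 (fun r => (map_poly th r).[z]))] :=
  resultant_in_ideal p_gt1 q_gt1.
rewrite map_polyC hornerC => ->.
by rewrite rmorphD !rmorphM !hornerE (rootP pz) (rootP qz) !mulr0 addr0.
Qed.

Lemma map_resultant_syzygy p q :
    th (resultant p q) = 0 ->
  exists u v : {poly K}, [/\ (u != 0) || (v != 0),
    (size u <= (size q).-1)%N, (size v <= (size p).-1)%N &
    u * map_poly th p + v * map_poly th q = 0].
Proof.
set p' := map_poly th p; set q' := map_poly th q.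
set dp := (size p).-1; set dq := (size q).-1 => res0.
have : \det (map_mx th (Sylvester_mx p q)) == 0 by rewrite det_map_mx res0.
have -> : map_mx th (Sylvester_mx p q) =
    col_mx (lin1_mx (poly_rV \o p' \o* @rVpoly K dq))
           (lin1_mx (poly_rV \o q' \o* @rVpoly K dp)).
  rewrite map_col_mx; congr col_mx;
  by apply: map_lin1_mx => v /=; rewrite map_poly_rV rmorphM /= map_rVpoly.
case/det0P => w nz_w; rewrite -[w]hsubmxK mul_row_col !mul_rV_lin1 /=.
set u := rVpoly _; set v := rVpoly _ => Euv.
have le_u : (size u <= dq)%N by apply: size_poly.
have le_v : (size v <= dp)%N by apply: size_poly.
exists u, v; split => //.
  apply: contraNT nz_w; rewrite negb_or !negbK => /andP [/eqP u0 /eqP v0].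
  rewrite -[w]hsubmxK -row_mx0 -[lsubmx w]rVpolyK -[rsubmx w]rVpolyK.
  by rewrite -/u -/v u0 v0 !linear0.
have le_p' : (size p' <= 1 + dp)%N.
  by rewrite add1n (leq_trans (size_poly _ _)) ?leqSpred.
have le_q' : (size q' <= 1 + dq)%N.
  by rewrite add1n (leq_trans (size_poly _ _)) ?leqSpred.
have le_uv : (size (u * p' + v * q')%R <= dq + dp)%N.
  rewrite (leq_trans (size_polyD _ _)) // geq_max.
  rewrite !(leq_trans (size_polyMleq _ _)) // -subn1 leq_subLR.
    by apply: leq_trans (leq_add le_v le_q') _; lia.
  by apply: leq_trans (leq_add le_u le_p') _; lia.
by rewrite -[LHS](poly_rV_K le_uv) linearD /= Euv linear0.
Qed.

End MapResultant.

Lemma coprimep_syzygy_eq0 (K : fieldType) (p q u v : {poly K}) :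
  coprimep p q -> (size v < size p)%N -> u * p + v * q = 0 -> u = 0 /\ v = 0.
Proof.
move=> cop_pq lt_vp Euv.
have nz_p : p != 0 by rewrite -size_poly_gt0 (leq_ltn_trans _ lt_vp).
have v0 : v = 0.
  apply/eqP; apply: contraLR lt_vp => nz_v; rewrite -leqNgt dvdp_leq //.
  have Evq : v * q = - (u * p) by apply/eqP; rewrite -addr_eq0 addrC Euv.
  by rewrite -(Gauss_dvdpl _ cop_pq) Evq dvdpNr dvdp_mull.
move: Euv; rewrite v0 mul0r addr0 => /eqP.
by rewrite mulf_eq0 (negPf nz_p) orbF => /eqP.
Qed.

Lemma map_resultant_common_root (A : comNzRingType) (K : closedFieldType)
    (th : {rmorphism A -> K}) (p q : {poly A}) :
    (th (lead_coef p) != 0) || (th (lead_coef q) != 0) ->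
    th (resultant p q) = 0 ->
  exists z, root (map_poly th p) z && root (map_poly th q) z.
Proof.
set p' := map_poly th p; set q' := map_poly th q.
move=> lc_neq0 /map_resultant_syzygy [u [v [nz_uv le_u le_v Euv]]].
have [gcd_gt1 | gcd_le1] := ltnP 1 (size (gcdp p' q')).
  have /closed_rootP [z gz] : size (gcdp p' q') != 1 by rewrite gtn_eqF.
  by exists z; rewrite !(root_dvdp _ gz) ?dvdp_gcdl ?dvdp_gcdr.
have size_map r :
    th (lead_coef r) != 0 -> size (map_poly th r) = size r /\ (0 < size r)%N.
  move=> lc_r; split; first exact: size_map_poly_id0.
  rewrite size_poly_gt0 -lead_coef_eq0.
  by apply: contra_neq lc_r => ->; rewrite rmorph0.
have cop : coprimep p' q'.
  rewrite /coprimep eqn_leq gcd_le1 size_poly_gt0 gcdp_eq0 negb_and.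
  rewrite -!size_poly_gt0.
  by case/orP: lc_neq0 => /size_map [-> ->]; rewrite ?orbT.
suff [u0 v0] : u = 0 /\ v = 0 by rewrite u0 v0 eqxx in nz_uv.
case/orP: lc_neq0 => /size_map [sz_map sz_gt0].
  apply: coprimep_syzygy_eq0 cop _ Euv.
  by rewrite sz_map (leq_ltn_trans le_v) // prednK.
rewrite addrC in Euv; rewrite coprimep_sym in cop.
suff [v0 u0] : v = 0 /\ u = 0 by [].
apply: coprimep_syzygy_eq0 cop _ Euv.
by rewrite sz_map (leq_ltn_trans le_u) // prednK.
Qed.

Lemma closed_field_nth_root (F : closedFieldType) (c : F) n :
  (0 < n)%N -> exists x, x ^+ n = c.
Proof.
move=> n_gt0; have /closed_rootP [x] : size ('X^n - c%:P) != 1.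
  by rewrite size_XnsubC // eqSS -lt0n.
by rewrite rootE !hornerE subr_eq0 => /eqP; exists x.
Qed.

Lemma closed_monomial_point (F : closedFieldType) (x r : F) (i j : nat) :
    x != 0 -> r != 0 -> (0 < i + j)%N ->
  exists a b, [/\ a ^+ i * b ^+ j = r, b != 0 & a = x \/ b = x].
Proof.
move=> nz_x nz_r ij_gt0; have [j0 | j_gt0] := posnP j.
  rewrite j0 addn0 in ij_gt0; have [a ai] := closed_field_nth_root r ij_gt0.
  by exists a, x; rewrite j0 expr0 mulr1; split; [| | right].
have [b bj] := closed_field_nth_root (r / x ^+ i) j_gt0.
exists x, b; split; last by left.
  by rewrite bj mulrC divfK // expf_neq0.
have : b ^+ j != 0 by rewrite bj mulf_neq0 ?invr_eq0 ?expf_neq0.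
by apply: contraNneq => ->; rewrite expr0n gtn_eqF.
Qed.

Lemma root_of_unity_neq0 (R : nzRingType) (z : R) :
  Defs.root_of_unity z -> z != 0.
Proof.
case=> k k_gt0; apply: contra_eq_neq => ->.
by rewrite expr0n gtn_eqF // eq_sym oner_neq0.
Qed.

Lemma not_mult_indep (F : fieldType) (h1 h2 : F) (m1 m2 : int) (k : nat) :
    (0 < `|m1| + `|m2|)%N -> (0 < k)%N -> (h1 ^ m1 * h2 ^ m2) ^+ k = 1 ->
  ~ mult_indep h1 h2.
Proof.
move=> m_gt0 k_gt0 Ek indep.
have nz_k : k%:Z != 0 by case: k k_gt0 Ek.
have Ek' : h1 ^ (m1 * k) * h2 ^ (m2 * k) = 1 by rewrite -!exprz_exp -expfzMl.
have [/eqP m1k /eqP m2k] := indep _ _ Ek'.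
move: m1k m2k; rewrite !mulf_eq0 (negPf nz_k) !orbF => /eqP m1_0 /eqP m2_0.
by move: m_gt0; rewrite m1_0 m2_0.
Qed.

Definition map_horner (A : nzRingType) (K : comNzRingType)
  (f : {rmorphism A -> K}) (u : K) : {rmorphism {poly A} -> K} :=
  horner_morph (fun a => mulrC u (f a)).

Lemma map_hornerE (A : nzRingType) (K : comNzRingType)
  (f : {rmorphism A -> K}) u p : map_horner f u p = (map_poly f p).[u].
Proof. by []. Qed.

Section Specialization.

Variables (C : fieldType) (L : closedFieldType) (embC : {rmorphism C -> L}).
Implicit Types (a b t x : L) (w : {poly C}) (u ca cb S : {poly {poly C}}).

Definition ev a : {rmorphism {poly C} -> L} := map_horner embC a.

(* [ev2 a b] sends the inner variable to [a] and the outer one to [b]. *)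
Definition ev2 a b : {rmorphism {poly {poly C}} -> L} := map_horner (ev a) b.

Lemma evC a c : ev a c%:P = embC c.
Proof. by rewrite map_hornerE map_polyC hornerC. Qed.

Lemma evX a : ev a 'X = a.
Proof. by rewrite map_hornerE map_polyX hornerX. Qed.

Lemma ev2C a b w : ev2 a b w%:P = ev a w.
Proof. by rewrite map_hornerE map_polyC hornerC. Qed.

Lemma ev2X a b : ev2 a b 'X = b.
Proof. by rewrite map_hornerE map_polyX hornerX. Qed.

Lemma ev2_mapC a b w : ev2 a b w^:P = ev b w.
Proof.
rewrite map_hornerE -map_poly_comp map_hornerE.
by congr (_.[_]); apply: eq_map_poly => c /=; rewrite evC.
Qed.

Lemma map_ev2_polyC a b u : map_poly (ev2 a b) u^:P = map_poly (ev a) u.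
Proof. by rewrite -map_poly_comp; apply: eq_map_poly => w /=; rewrite ev2C. Qed.

Lemma map_ev2_mapC a b u :
  map_poly (ev2 a b) (map_poly (map_poly polyC) u) = map_poly (ev b) u.
Proof.
by rewrite -map_poly_comp; apply: eq_map_poly => w /=; rewrite ev2_mapC.
Qed.

Lemma ev2E a b u : ev2 a b u = (map_poly (map_poly embC) u).[b, a].
Proof.
rewrite -[RHS]horner_evalE -horner_map /= horner_evalE hornerC -map_poly_comp.
by rewrite map_hornerE.
Qed.

Lemma ev2_swapXY a b u : ev2 a b (swapXY u) = ev2 b a u.
Proof. by rewrite !ev2E -swapXY_map horner2_swapXY. Qed.

Lemma ev_neq0 a w : ~ algebraicOver embC a -> w != 0 -> ev a w != 0.
Proof.
move=> transc_a nz_w; apply/eqP => ev0; apply: transc_a.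
by exists w; rewrite // /root -map_hornerE ev0.
Qed.

(* Res_x(ca(x, y1), cb(x, y2)) in C[y1][y2], for ca, cb in C[x][y]. *)
Definition resx ca cb : {poly {poly C}} :=
  resultant (swapXY ca)^:P (map_poly (map_poly polyC) (swapXY cb)).

Lemma resx_common_root ca cb a b :
    ca \is monic -> cb \is monic ->
    ~ algebraicOver embC a \/ ~ algebraicOver embC b ->
  ev2 a b (resx ca cb) = 0 -> exists x, ev2 x a ca = 0 /\ ev2 x b cb = 0.
Proof.
move=> mon_ca mon_cb transc /map_resultant_common_root [].
  have nz_lc u : u \is monic -> lead_coef (swapXY u) != 0.
    by rewrite lead_coef_eq0 swapXY_eq0; apply: monic_neq0.
  rewrite !lead_coef_map_eq ?polyC_eq0 ?map_polyC_eq0 ?nz_lc // ev2C ev2_mapC.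
  by case: transc => /ev_neq0 ->; rewrite ?nz_lc ?orbT.
move=> x; rewrite map_ev2_polyC map_ev2_mapC => /andP [/rootP ra /rootP rb].
by exists x; rewrite -ev2_swapXY -[ev2 x b _]ev2_swapXY !map_hornerE.
Qed.

Lemma algebraic_monic_root ca x a :
    ca \is monic -> ev2 x a ca = 0 ->
  algebraicOver embC x -> algebraicOver embC a.
Proof.
move=> mon_ca ca_xa; apply: algebraic_root_polyXY; exists (swapXY ca).
  rewrite -swapXY_map horner_swapXY -map_poly_comp.
  by rewrite (eq_map_poly (g := ev x)) ?monic_neq0 ?monic_map.
by rewrite /root -ev2E ev2_swapXY ca_xa.
Qed.

(* Res_y1(ca, Res_y2(cb, S)) in C[x] vanishes at the transcendental x, hence
   everywhere. *)
Lemma generic_root_relation ca cb S x a b :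
    ca \is monic -> cb \is monic -> ~ algebraicOver embC x ->
    ev2 x a ca = 0 -> ev2 x b cb = 0 -> ev2 a b S = 0 ->
  forall t, exists h1 h2,
    [/\ ev2 t h1 ca = 0, ev2 t h2 cb = 0 & ev2 h1 h2 S = 0].
Proof.
move=> mon_ca mon_cb transc_x ca_xa cb_xb S_ab t.
pose M := resultant cb^:P (map_poly (map_poly polyC) S).
have M_xa : ev2 x a M = 0.
  apply: (map_resultant_eq0 (z := b)); rewrite ?monic_map //.
    by rewrite map_ev2_polyC /root -map_hornerE cb_xb.
  by rewrite map_ev2_mapC /root -map_hornerE S_ab.
have N0 : resultant ca M = 0.
  apply/eqP; apply: contraTT (@ev_neq0 x _ transc_x) _.
  by apply/eqP/(map_resultant_eq0 (z := a)) => //;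
    rewrite /root -map_hornerE ?ca_xa ?M_xa.
have [h1 /andP [/rootP ca_th1 /rootP M_th1]] : exists h1,
    root (map_poly (ev t) ca) h1 && root (map_poly (ev t) M) h1.
  apply: map_resultant_common_root; last by rewrite N0 rmorph0.
  by rewrite (monicP mon_ca) rmorph1 oner_neq0.
have [h2 /andP []] : exists h2, root (map_poly (ev2 t h1) cb^:P) h2 &&
    root (map_poly (ev2 t h1) (map_poly (map_poly polyC) S)) h2.
  apply: map_resultant_common_root; last by rewrite map_hornerE.
  by rewrite (monicP (monic_map _ mon_cb)) rmorph1 oner_neq0.
rewrite map_ev2_polyC map_ev2_mapC => /rootP cb_th2 /rootP S_h12.
by exists h1, h2; rewrite !map_hornerE.
Qed.

Section TranscendentalPoint.

Variable xi : L.
Hypothesis transc_xi : ~ algebraicOver embC xi.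

Let xi_neq0 : xi != 0.
Proof. by apply: contra_not_neq transc_xi => ->; apply: algebraic0. Qed.

(* Splitting off the factor y^e of cb keeps h2 away from 0. *)
Lemma resx_factor_roots ca cb S a b :
    ca \is monic -> cb \is monic -> (exists q, resx ca cb = q * S) ->
    ev2 a b S = 0 -> b != 0 ->
    ~ algebraicOver embC a \/ ~ algebraicOver embC b ->
  exists h1 h2,
    [/\ ev2 xi h1 ca = 0, ev2 xi h2 cb = 0, h2 != 0 & ev2 h1 h2 S = 0].
Proof.
move=> mon_ca mon_cb [q Eres] S_ab nz_b transc_ab.
have [e [cb0 /implyP/(_ (monic_neq0 mon_cb)) cb0_0 Ecb]] :=
  multiplicity_XsubC cb 0.
have mon_cb0 : cb0 \is monic.
  by rewrite -(monicMr cb0 (monic_exp e (monicXsubC 0))) -Ecb.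
have [x [ca_xa cb_xb]] : exists x, ev2 x a ca = 0 /\ ev2 x b cb = 0.
  by apply: resx_common_root; rewrite // Eres rmorphM /= S_ab mulr0.
have cb0_xb : ev2 x b cb0 = 0.
  move: cb_xb; rewrite Ecb rmorphM rmorphXn rmorphB /= ev2X ev2C evC rmorph0.
  rewrite subr0 => /eqP; rewrite mulf_eq0 expf_eq0 (negPf nz_b) andbF orbF.
  by move/eqP.
have transc_x : ~ algebraicOver embC x.
  case: transc_ab => transc alg_x; apply: transc.
    exact: algebraic_monic_root mon_ca ca_xa alg_x.
  exact: algebraic_monic_root mon_cb0 cb0_xb alg_x.
have [h1 [h2 [ca_h1 cb0_h2 S_h12]]] :=
  generic_root_relation mon_ca mon_cb0 transc_x ca_xa cb0_xb S_ab xi.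
exists h1, h2; split => //.
  by rewrite Ecb rmorphM /= cb0_h2 mul0r.
apply/eqP => h2_0; move: cb0_h2.
rewrite h2_0 map_hornerE horner_coef0 coef_map /=.
by apply/eqP; rewrite ev_neq0 // -horner_coef0.
Qed.

Lemma resx_prod_factor_dependent ca cb i j rho q :
    ca \is monic -> cb \is monic -> (0 < i + j)%N -> Defs.root_of_unity rho ->
    resx ca cb = q * ('Y ^+ i * 'X ^+ j - rho%:P%:P) ->
  exists h1 h2,
    [/\ ev2 xi h1 ca = 0, ev2 xi h2 cb = 0 & ~ mult_indep h1 h2].
Proof.
move=> mon_ca mon_cb ij_gt0 rho1 Eres.
have ev2_factor (s t : L) :
    ev2 s t ('Y ^+ i * 'X ^+ j - rho%:P%:P) = s ^+ i * t ^+ j - embC rho.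
  by rewrite rmorphB rmorphM !rmorphXn /= ev2C evX ev2X ev2C evC.
have nz_rho : embC rho != 0 by rewrite fmorph_eq0 root_of_unity_neq0.
have [a [b [Eab nz_b a_or_b]]] := closed_monomial_point xi_neq0 nz_rho ij_gt0.
have [||h1 [h2 [ca_h1 cb_h2 _]]] :=
  resx_factor_roots (a := a) mon_ca mon_cb (ex_intro _ q Eres) _ nz_b.
- by rewrite ev2_factor Eab subrr.
- by case: a_or_b => ->; [left | right].
rewrite ev2_factor => /subr0_eq Eh; exists h1, h2; split => //.
have [k k_gt0 rho_k] := rho1.
apply: (not_mult_indep (m1 := i%:Z) (m2 := j%:Z) ij_gt0 k_gt0).
by rewrite -!exprnP Eh -rmorphXn rho_k rmorph1.
Qed.

Lemma resx_ratio_factor_dependent ca cb i j rho q :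
    ca \is monic -> cb \is monic -> (0 < i + j)%N -> Defs.root_of_unity rho ->
    resx ca cb = q * ('Y ^+ i - rho%:P%:P * 'X ^+ j) ->
  exists h1 h2,
    [/\ ev2 xi h1 ca = 0, ev2 xi h2 cb = 0 & ~ mult_indep h1 h2].
Proof.
move=> mon_ca mon_cb ij_gt0 rho1 Eres.
have ev2_factor (s t : L) :
    ev2 s t ('Y ^+ i - rho%:P%:P * 'X ^+ j) = s ^+ i - embC rho * t ^+ j.
  by rewrite rmorphB rmorphM !rmorphXn /= ev2C evX ev2X ev2C evC.
have nz_rho : embC rho != 0 by rewrite fmorph_eq0 root_of_unity_neq0.
have [a [b [Eab nz_b a_or_b]]] := closed_monomial_point xi_neq0 nz_rho ij_gt0.
have [||h1 [h2 [ca_h1 cb_h2 nz_h2]]] := resx_factor_roots (a := a) (b := b^-1)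
  mon_ca mon_cb (ex_intro _ q Eres) _ (invr_neq0 nz_b).
- by rewrite ev2_factor exprVn -Eab mulfK ?expf_neq0 // subrr.
- case: a_or_b => ->; [by left | right].
  by move=> /algebraic_inv; rewrite invrK.
rewrite ev2_factor => /subr0_eq Eh; exists h1, h2; split => //.
have [k k_gt0 rho_k] := rho1.
apply: (not_mult_indep (m1 := i%:Z) (m2 := - j%:Z) _ k_gt0).
  by rewrite abszN.
by rewrite -exprnN -exprnP Eh mulfK ?expf_neq0 // -rmorphXn rho_k rmorph1.
Qed.

End TranscendentalPoint.

End Specialization.

Lemma special_factor_dependent_roots (R : realType) (L : closedFieldType)
    (embC : {rmorphism R[i] -> L}) (xi : L) (ca cb : {poly {poly R[i]}}) :
    ~ algebraicOver embC xi -> ca \is monic -> cb \is monic ->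
    has_special_factor (resx ca cb) ->
  exists h1 h2,
    [/\ ev2 embC xi h1 ca = 0, ev2 embC xi h2 cb = 0 & ~ mult_indep h1 h2].
Proof.
move=> transc mon_ca mon_cb [i [j [rho [ij_gt0 rho1 [[q Eres] | [q Eres]]]]]].
  exact: resx_prod_factor_dependent Eres.
exact: resx_ratio_factor_dependent Eres.
Qed.

Lemma swapXY_char_poly (R : comNzRingType) n (M : 'M[{poly R}]_n) :
  swapXY (char_poly M) = \det ('Y%:M - map_mx (map_poly polyC) M).
Proof.
rewrite /char_poly -det_map_mx; congr (\det _); apply/matrixP => i j.
by rewrite !mxE rmorphB rmorphMn /= swapXY_X swapXY_polyC.
Qed.

Section ResultantsAsResx.

Variables (R : realType) (n : nat).
Implicit Types f g : {poly 'M[R[i]]_n.+1}.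

Lemma Pf_swapXY f : Pf f = (swapXY (char_poly (evalXI f)))^:P.
Proof.
rewrite swapXY_char_poly -det_map_mx; congr (\det _); apply/matrixP => i j.
by rewrite !mxE rmorphB rmorphMn /= !map_polyC /liftX -map_poly_comp.
Qed.

Lemma Pg_swapXY g :
  Pg g = map_poly (map_poly polyC) (swapXY (char_poly (evalXI g))).
Proof.
rewrite swapXY_char_poly -det_map_mx; congr (\det _); apply/matrixP => i j.
rewrite !mxE rmorphB rmorphMn /= map_polyC /= map_polyX /liftX -map_poly_comp.
by congr (_ - _); apply: eq_map_poly => c /=; rewrite map_polyC.
Qed.

Lemma Rfg_resx f g :
  Rfg f g = resx (char_poly (evalXI f)) (char_poly (evalXI g)).
Proof. by rewrite /Rfg Pf_swapXY Pg_swapXY. Qed.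

Lemma Tfg_resx f g :
  Tfg f g = resx (char_poly (evalXI f)) ('X - (\det (evalXI g))%:P).
Proof.
rewrite /Tfg /resx -Pf_swapXY rmorphB /= swapXY_X swapXY_polyC rmorphB /=.
rewrite map_polyC /= map_polyX /liftX -map_poly_comp.
by congr (resultant _ (_ - _)); apply: eq_map_poly => c /=; rewrite map_polyC.
Qed.

End ResultantsAsResx.

Section PolyEmbedding.

Variables (C : fieldType) (L : closedFieldType).
Variable phi : {rmorphism {poly C} -> L}.

Lemma ev_phiX w : ev (phi \o polyC) (phi 'X) w = phi w.
Proof.
by rewrite map_hornerE map_poly_comp horner_map /= -/(w \Po 'X) comp_polyXr.
Qed.

Lemma ev2_phiX h u : ev2 (phi \o polyC) (phi 'X) h u = (map_poly phi u).[h].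
Proof.
by rewrite map_hornerE; congr (_.[_]); apply: eq_map_poly => w; rewrite ev_phiX.
Qed.

Lemma phiX_transcendental :
  injective phi -> ~ algebraicOver (phi \o polyC) (phi 'X).
Proof.
move=> inj_phi [w nz_w]; rewrite /root -map_hornerE ev_phiX -(rmorph0 phi).
by rewrite (inj_eq inj_phi) (negPf nz_w).
Qed.

End PolyEmbedding.

Theorem lemma2p1 (R : realType) (n : nat) (f g : {poly 'M[R[i]]_n.+1})
  (hf : (1 < size f)%N) (hg : (1 < size g)%N)
  (L : closedFieldType) (iota : {rmorphism {fraction {poly R[i]}} -> L})
  (hL : algebraic_ext iota) :
  ((forall h1 h2 : L, eigenvalue (embXI iota f) h1 ->
      eigenvalue (embXI iota g) h2 -> mult_indep h1 h2) ->
    ~ has_special_factor (Rfg f g)) /\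
  ((forall h1 : L, eigenvalue (embXI iota f) h1 ->
      mult_indep h1 (iota (tofrac (\det (evalXI g))))) ->
    ~ has_special_factor (Tfg f g)).
Proof.
pose phi : {rmorphism {poly R[i]} -> L} := iota \o @tofrac _.
have transc : ~ algebraicOver (phi \o polyC) (phi 'X).
  apply: phiX_transcendental => p q /fmorph_inj /eqP.
  by rewrite tofrac_eq => /eqP.
have eigen u h : ev2 (phi \o polyC) (phi 'X) h (char_poly (evalXI u)) = 0 ->
    eigenvalue (embXI iota u) h.
  by rewrite ev2_phiX map_char_poly eigenvalue_root_char => /rootP.
split => [indep | indep_det].
  rewrite Rfg_resx => /(special_factor_dependent_roots transc).
  case/(_ (char_poly_monic _) (char_poly_monic _)) => h1 [h2 [/eigen + /eigen]].
  by move=> eig1 eig2; apply; apply: indep.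
rewrite Tfg_resx => /(special_factor_dependent_roots transc).
case/(_ (char_poly_monic _) (monicXsubC _)) => h1 [h2 [/eigen eig1 +]].
rewrite ev2_phiX rmorphB /= map_polyX map_polyC hornerXsubC => /subr0_eq ->.
by apply; apply: indep_det.
Qed.
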